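(* Let $G$ and $H$ be graphs. (i) If $*\in\{\Box,\times,\boxtimes\}$ (Cartesian, direct, or strong product), then $\chi_{\mathrm{so}}(G*H)\leq \chi_{\mathrm{so}}(G)\,\chi_{\mathrm{so}}(H)$. (ii) For the lexicographic product, $\chi_{\mathrm{so}}(G\circ H)\leq \chi_{\mathrm{so}}(G)\,(\chi_{\mathrm{so}}(H+K_1)-1)$.
   Context: All graphs are finite, simple and undirected. A strong odd coloring of a graph $G$ is a proper vertex coloring of $G$ such that for every non-isolated vertex $v$ and every color $c$, either no vertex of the open neighborhood $N_G(v)$ has color $c$, or color $c$ is used on an odd number of vertices of $N_G(v)$; $\chi_{\mathrm{so}}(G)$ is the minimum number of colors in such a coloring. $H+K_1$ denotes the graph obtained from $H$ by adding a new vertex adjacent to all vertices of $H$. All products have vertex set $V_G\times V_H$. Cartesian product $G\Box H$: $(g,h)(g',h')$ is an edge iff ($g=g'$ and $hh'\in E_H$) or ($gg'\in E_G$ and $h=h'$). Direct product $G\times H$: edge iff $gg'\in E_G$ and $hh'\in E_H$. Strong product $G\boxtimes H$: edge iff $(g,h)\neq(g',h')$, $g'\in N[g]$ and $h'\in N[h]$ (closed neighborhoods). Lexicographic product $G\circ H$: edge iff $gg'\in E_G$, or ($g=g'$ and $hh'\in E_H$). *)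

(* A simple graph is an irreflexive symmetric relation on a finType. *)
From mathcomp Require Import all_boot.
Set Implicit Arguments. Unset Strict Implicit. Unset Printing Implicit Defensive.

Section Defs.
Variable T : finType.
Variable e : rel T.

Definition is_so_coloring (k : nat) (col : {ffun T -> 'I_k}) : bool :=
  [forall x, forall y, e x y ==> (col x != col y)] &&
  [forall v, [exists u, e v u] ==>
     [forall c : 'I_k,
        let n := #|[set u | e v u & col u == c]| in (n == 0) || odd n]].

Definition has_so_coloring (k : nat) : bool :=
  [exists col : {ffun T -> 'I_k}, is_so_coloring col].

(* For an irreflexive
   relation, an injective coloring with #|T| colors is strong odd, so the least
   such k is <= #|T| and is found by this search. *)
Definition chi_so : nat := find has_so_coloring (iota 0 (#|T|.+1)).
End Defs.

Section Products.
Variables (T U : finType) (e : rel T) (f : rel U).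

Definition cart_prod : rel (T * U) := fun x y =>
  ((x.1 == y.1) && f x.2 y.2) || (e x.1 y.1 && (x.2 == y.2)).
Definition direct_prod : rel (T * U) := fun x y =>
  e x.1 y.1 && f x.2 y.2.
Definition strong_prod : rel (T * U) := fun x y =>
  [&& x != y, (x.1 == y.1) || e x.1 y.1 & (x.2 == y.2) || f x.2 y.2].
Definition lex_prod : rel (T * U) := fun x y =>
  e x.1 y.1 || ((x.1 == y.1) && f x.2 y.2).
End Products.

(* H + K_1: add a new vertex (None) adjacent to all vertices of H. *)
Definition add_K1 (U : finType) (f : rel U) : rel (option U) := fun x y =>
  match x, y with
  | Some a, Some b => f a b
  | Some _, None | None, Some _ => true
  | None, None => false
  end.

From mathcomp Require Import all_boot.
Set Implicit Arguments. Unset Strict Implicit. Unset Printing Implicit Defensive.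

(* Colour a product by the pairs (c1 g, c2 h) of colours in the factors. The
   neighbours of (g, h) of colour (a, b) then form a product of colour classes
   of the factors: of two open neighbourhoods (direct product), of two closed
   neighbourhoods minus (g, h) itself, which is either empty or the whole
   product (strong product), or of a neighbourhood class and a singleton, the
   mixed terms being killed by properness (Cartesian product). A product of
   numbers that are 0 or odd is 0 or odd. For the lexicographic product the
   second factor must moreover have whole colour classes of size 0 or odd;
   restricting a strong odd colouring of H + K_1 to H gives such a colouring
   with one colour fewer, since the apex sees all of H and its colour is used
   nowhere else. *)

Definition zero_or_odd n := (n == 0) || odd n.

Lemma zero_or_oddM m n : zero_or_odd m -> zero_or_odd n -> zero_or_odd (m * n).
Proof.
rewrite /zero_or_odd muln_eq0 oddM.
by case/orP=> [->|->] // /orP [->|->]; rewrite ?orbT.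
Qed.

Section StrongOddColoring.
Variables (T C : finType) (e : rel T).

Definition nbhd_class (col : T -> C) v c := [set u | e v u & col u == c].
Definition cnbhd_class (col : T -> C) v c := [set u | (v == u) || e v u & col u == c].

Record so_coloring (col : T -> C) : Prop := SoColoring {
  so_proper : forall x y, e x y -> col x != col y;
  so_odd : forall v c, zero_or_odd #|nbhd_class col v c| }.

Variables (col : T -> C) (so : so_coloring col).

Lemma so_coloring_irr : irreflexive e.
Proof. by move=> x; apply/negP=> /(so_proper so); rewrite eqxx. Qed.

Lemma so_nbr_colorF x y : e x y -> (col y == col x) = false.
Proof. by move/(so_proper so); rewrite eq_sym => /negbTE. Qed.

Lemma nbhd_class_own v : nbhd_class col v (col v) = set0.
Proof. by apply/setP=> u; rewrite !inE; case evu: (e v u); rewrite //= (so_nbr_colorF evu). Qed.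

Lemma cnbhd_class_own v : cnbhd_class col v (col v) = [set v].
Proof.
apply/setP=> u; rewrite !inE [u == v]eq_sym; case: eqVneq => [->|_] /=; first by rewrite eqxx.
by move: (nbhd_class_own v) => /setP/(_ u); rewrite !inE.
Qed.

Lemma cnbhd_classE v c : col v != c -> cnbhd_class col v c = nbhd_class col v c.
Proof.
by move=> cvc; apply/setP=> u; rewrite !inE; case: eqVneq => //= <-; rewrite (negbTE cvc) andbF.
Qed.

Lemma so_odd_closed v c : zero_or_odd #|cnbhd_class col v c|.
Proof.
have [<-|cvc] := eqVneq (col v) c; first by rewrite cnbhd_class_own cards1.
by rewrite cnbhd_classE //; apply: so_odd.
Qed.

End StrongOddColoring.

Lemma so_coloring_bij (T C D : finType) (e : rel T) (col : T -> C) (g : C -> D) :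
  bijective g -> so_coloring e col -> so_coloring e (g \o col).
Proof.
case=> h gK hK [proper odd_class]; split=> [x y exy | v c] /=.
  by rewrite (bij_eq (Bijective gK hK)) proper.
suff ->: nbhd_class e (g \o col) v c = nbhd_class e col v (h c) by [].
by apply/setP=> u; rewrite !inE /= (can2_eq gK hK).
Qed.

Lemma so_coloring_id (T : finType) (e : rel T) : irreflexive e -> so_coloring e id.
Proof.
move=> irr; split=> [x y exy | v c]; first by apply: contraTneq exy => ->; rewrite irr.
rewrite /zero_or_odd; case evc: (e v c).
  suff ->: nbhd_class e id v c = [set c] by rewrite cards1.
  by apply/setP=> u; rewrite !inE; case: eqVneq => [->|]; rewrite ?evc ?andbF.
suff ->: nbhd_class e id v c = set0 by rewrite cards0.
by apply/setP=> u; rewrite !inE; case: eqVneq => [->|]; rewrite ?evc ?andbF.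
Qed.

Section ChiSo.
Variables (T : finType) (e : rel T).

Lemma has_so_coloringP k :
  reflect (exists col : T -> 'I_k, so_coloring e col) (has_so_coloring e k).
Proof.
apply: (iffP existsP) => [[col /andP [/forallP proper /forallP odd_class]] | [col so]].
  exists col; split=> [x y exy | v c]; first exact: implyP (forallP (proper x) y) exy.
  have [nbr|] := boolP [exists u, e v u]; first exact: forallP (implyP (odd_class v) nbr) c.
  rewrite negb_exists => /forallP isolated.
  suff ->: nbhd_class e col v c = set0 by rewrite cards0.
  by apply/setP=> u; rewrite !inE (negbTE (isolated u)).
exists [ffun x => col x]; apply/andP; split.
  apply/forallP=> x; apply/forallP=> y; apply/implyP; rewrite !ffunE.
  exact: so_proper so x y.
apply/forallP=> v; apply/implyP=> _; apply/forallP=> c /=.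
have ->: [set u | e v u & [ffun x => col x] u == c] = nbhd_class e col v c.
  by apply/setP=> u; rewrite !inE ffunE.
exact: so_odd.
Qed.

Lemma so_coloring_has (C : finType) (col : T -> C) :
  so_coloring e col -> has_so_coloring e #|C|.
Proof.
move=> so; apply/has_so_coloringP; exists (enum_rank \o col).
exact: so_coloring_bij (enum_rank_bij C) so.
Qed.

Lemma chi_so_min k : has_so_coloring e k -> chi_so e <= k.
Proof.
move=> hk; rewrite /chi_so; have [kT|Tk] := leqP k #|T|.
  rewrite leqNgt; apply/negP=> /(before_find 0).
  by rewrite nth_iota ?add0n ?hk // ltnS.
by apply: leq_trans (find_size _ _) _; rewrite size_iota.
Qed.

Lemma chi_so_has : irreflexive e -> has_so_coloring e (chi_so e).
Proof.
move=> irr; have hasT : has (has_so_coloring e) (iota 0 #|T|.+1).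
  apply/hasP; exists #|T|; first by rewrite mem_iota add0n ltnS leqnn.
  exact: so_coloring_has (so_coloring_id irr).
have := nth_find 0 hasT; rewrite nth_iota ?add0n //.
by have := hasT; rewrite has_find size_iota.
Qed.

Lemma chi_so_coloring :
  irreflexive e -> exists col : T -> 'I_(chi_so e), so_coloring e col.
Proof. by move/chi_so_has/has_so_coloringP. Qed.

Lemma chi_so_le_card (C : finType) (col : T -> C) :
  so_coloring e col -> chi_so e <= #|C|.
Proof. by move/so_coloring_has/chi_so_min. Qed.

End ChiSo.

Section Products.
Variables (T U C D : finType) (e : rel T) (f : rel U) (c1 : T -> C) (c2 : U -> D).

Definition pair_col (x : T * U) := (c1 x.1, c2 x.2).

Lemma direct_nbhd_class g h a b :
  nbhd_class (direct_prod e f) pair_col (g, h) (a, b) =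
  setX (nbhd_class e c1 g a) (nbhd_class f c2 h b).
Proof.
apply/setP=> -[g' h']; rewrite !inE /direct_prod /pair_col /= xpair_eqE.
by rewrite -!andbA; do !bool_congr.
Qed.

Lemma strong_nbhd_class g h a b :
  nbhd_class (strong_prod e f) pair_col (g, h) (a, b) =
  setX (cnbhd_class e c1 g a) (cnbhd_class f c2 h b) :\ (g, h).
Proof.
apply/setP=> -[g' h']; rewrite !inE /strong_prod /pair_col /= [(g', h') == _]eq_sym.
by rewrite xpair_eqE -!andbA; do !bool_congr.
Qed.

Lemma cart_nbhd_class g h a b : so_coloring e c1 ->
  nbhd_class (cart_prod e f) pair_col (g, h) (a, b) =
  if c1 g == a then setX [set g] (nbhd_class f c2 h b)
  else if c2 h == b then setX (nbhd_class e c1 g a) [set h] else set0.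
Proof.
move=> so1; have irr := so_coloring_irr so1.
apply/setP=> -[g' h']; rewrite !inE /cart_prod /pair_col /= xpair_eqE [g == g']eq_sym.
have [-> | ng] := eqVneq g' g.
  by rewrite irr /= orbF; do 2?case: ifP; rewrite ?inE ?eqxx ?irr ?andbF.
have [<- | ga] := eqVneq (c1 g) a.
  rewrite !inE /= (negbTE ng).
  by case egg: (e g g'); rewrite //= (so_nbr_colorF so1 egg) andbF.
have [<- | nh] := eqVneq h h'; case: ifP => hb; rewrite !inE /= ?eqxx ?andbF //=.
- by rewrite !andbT.
- by rewrite [h' == h]eq_sym (negbTE nh) andbF.
Qed.

Lemma lex_nbhd_class g h a b : so_coloring e c1 ->
  nbhd_class (lex_prod e f) pair_col (g, h) (a, b) =
  if c1 g == a then setX [set g] (nbhd_class f c2 h b)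
  else setX (nbhd_class e c1 g a) [set y | c2 y == b].
Proof.
move=> so1; have irr := so_coloring_irr so1.
apply/setP=> -[g' h']; rewrite !inE /lex_prod /pair_col /= xpair_eqE [g == g']eq_sym.
have [-> | ng] := eqVneq g' g.
  by case: ifP => ga; rewrite !inE /= ?eqxx ?irr ?ga ?andbF.
rewrite /= orbF; case: ifP => [/eqP <- | ga]; rewrite !inE /= ?(negbTE ng).
  by case egg: (e g g'); rewrite //= (so_nbr_colorF so1 egg).
by rewrite andbA.
Qed.

Hypotheses (so1 : so_coloring e c1) (so2 : so_coloring f c2).

Lemma pair_col_proper (E : rel (T * U)) :
  (forall x y, E x y -> e x.1 y.1 || f x.2 y.2) ->
  forall x y, E x y -> pair_col x != pair_col y.
Proof.
move=> E_proj x y /E_proj /orP [exy | fxy]; rewrite /pair_col xpair_eqE.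
  by rewrite (negbTE (so_proper so1 exy)).
by rewrite (negbTE (so_proper so2 fxy)) andbF.
Qed.

Lemma so_coloring_cart : so_coloring (cart_prod e f) pair_col.
Proof.
split=> [|[g h] [a b]].
  by apply: pair_col_proper => x y /orP [/andP [_ ->] | /andP [-> _]]; rewrite ?orbT.
rewrite cart_nbhd_class //; case: ifP => _; [|case: ifP => _];
  by rewrite ?cards0 ?cardsX ?cards1 ?mul1n ?muln1 ?so_odd.
Qed.

Lemma so_coloring_direct : so_coloring (direct_prod e f) pair_col.
Proof.
split=> [|[g h] [a b]]; first by apply: pair_col_proper => x y /andP [-> _].
by rewrite direct_nbhd_class cardsX zero_or_oddM ?so_odd.
Qed.

Lemma so_coloring_strong : so_coloring (strong_prod e f) pair_col.
Proof.
split=> [|[g h] [a b]].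
  apply: pair_col_proper => -[g h] [g' h'] /and3P [/= nxy].
  move=> /orP [/eqP eqg | ->] // /orP [/eqP eqh | ->]; rewrite ?orbT //.
  by move: nxy; rewrite eqg eqh eqxx.
rewrite strong_nbhd_class; set X := setX _ _.
have := cardsD1 (g, h) X; have [inX | outX] := boolP ((g, h) \in X); last first.
  rewrite add0n => <-.
  by rewrite cardsX zero_or_oddM ?(so_odd_closed so1) ?(so_odd_closed so2).
move: inX; rewrite !inE /= !eqxx /= => /andP [/eqP ga /eqP hb].
by rewrite /X -ga -hb !cnbhd_class_own // cardsX !cards1 add1n => -[<-].
Qed.

Lemma so_coloring_lex :
  (forall b, zero_or_odd #|[set y | c2 y == b]|) ->
  so_coloring (lex_prod e f) pair_col.
Proof.
move=> class_odd; split=> [|[g h] [a b]].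
  by apply: pair_col_proper => x y /orP [-> | /andP [_ ->]]; rewrite ?orbT.
rewrite lex_nbhd_class //; case: ifP => _;
  by rewrite cardsX ?cards1 ?mul1n ?zero_or_oddM ?so_odd.
Qed.

End Products.

Lemma add_K1_irr (U : finType) (f : rel U) : irreflexive f -> irreflexive (add_K1 f).
Proof. by move=> irr [u|] /=. Qed.

Lemma card_sig_neq (C : finType) (c0 : C) : #|{: {c : C | c != c0}}| = #|C| - 1.
Proof. by rewrite card_sig subn1 -(cardC1 c0); apply: eq_card. Qed.

Section Apex.
Variables (U C : finType) (f : rel U) (col : option U -> C).
Hypothesis so : so_coloring (add_K1 f) col.

Lemma apex_color_unique u : col (Some u) != col None.
Proof. exact: so_proper so (Some u) None isT. Qed.

Definition apex_free_col u : {c : C | c != col None} :=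
  exist _ (col (Some u)) (apex_color_unique u).

Lemma nbhd_class_Some v c :
  nbhd_class (add_K1 f) col (Some v) (val c) = Some @: nbhd_class f apex_free_col v c.
Proof.
apply/setP=> -[u|]; first by rewrite (mem_imset _ _ Some_inj) !inE -val_eqE.
rewrite !inE /= eq_sym (negbTE (valP c)); apply/esym/imsetP => -[x _] //.
Qed.

Lemma nbhd_class_None c :
  nbhd_class (add_K1 f) col None (val c) = Some @: [set u | apex_free_col u == c].
Proof.
apply/setP=> -[u|]; first by rewrite (mem_imset _ _ Some_inj) !inE -val_eqE.
by rewrite !inE /=; apply/esym/imsetP => -[x _].
Qed.

Lemma so_coloring_apex_free : so_coloring f apex_free_col.
Proof.
split=> [x y fxy | v c]; first by rewrite -val_eqE (so_proper so (x := Some x) (y := Some y)).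
by have := so_odd so (Some v) (val c); rewrite nbhd_class_Some card_imset //; apply: Some_inj.
Qed.

Lemma apex_free_class_odd c : zero_or_odd #|[set u | apex_free_col u == c]|.
Proof.
by have := so_odd so None (val c); rewrite nbhd_class_None card_imset //; apply: Some_inj.
Qed.

End Apex.

Theorem theorem4p2 (T U : finType) (e : rel T) (f : rel U) :
  symmetric e -> irreflexive e -> symmetric f -> irreflexive f ->
  [/\ chi_so (cart_prod e f) <= chi_so e * chi_so f,
      chi_so (direct_prod e f) <= chi_so e * chi_so f,
      chi_so (strong_prod e f) <= chi_so e * chi_so f
    & chi_so (lex_prod e f) <= chi_so e * (chi_so (add_K1 f) - 1)].
Proof.
move=> _ irr_e _ irr_f.
have [c1 so1] := chi_so_coloring irr_e.
have [c2 so2] := chi_so_coloring irr_f.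
have [c3 so3] := chi_so_coloring (add_K1_irr irr_f).
split.
- apply: leq_trans (chi_so_le_card (so_coloring_cart so1 so2)) _.
  by rewrite card_prod !card_ord.
- apply: leq_trans (chi_so_le_card (so_coloring_direct so1 so2)) _.
  by rewrite card_prod !card_ord.
- apply: leq_trans (chi_so_le_card (so_coloring_strong so1 so2)) _.
  by rewrite card_prod !card_ord.
- have so_lex := so_coloring_lex so1 (so_coloring_apex_free so3) (apex_free_class_odd so3).
  apply: leq_trans (chi_so_le_card so_lex) _.
  by rewrite card_prod card_sig_neq !card_ord.
Qed.
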